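(* Let $(S,M)$ be a Coxeter matrix, $L_S$ a weight function, $e=\{s_+,s_-\}$ with $m_{s_+,s_-}=3$, and $(S/e,N)$ the edge contraction with the induced weight function $L_{S/e}$. Then there is an $\mathcal A$-algebra homomorphism $\phi_v:H_{S/e}\to H_S$ such that $\phi_v(T'_s)=T_s$ for all $s\in S/e$, $s\ne s_0$, and $\phi_v(T'_{s_0})=T_{s_+}T_{s_-}T_{s_+}^{-1}$.
   Context: $\mathcal A=\mathbb Z[v,v^{-1}]$. A Coxeter matrix on $S$ is a symmetric matrix $M=(m_{s,s'})$ with entries in $\mathbb Z_{\ge1}\sqcup\{\infty\}$, $m_{s,s'}=1$ iff $s=s'$; $W_{S,M}$ is the associated Coxeter group. A weight function is a map $L_S:S\to\mathbb Z$ with $L_S(s)=L_S(s')$ whenever $s,s'$ are conjugate in $W_{S,M}$; put $v_s=v^{L_S(s)}$. The Hecke algebra $H_S$ is the associative unital $\mathcal A$-algebra generated by $T_s$ ($s\in S$) with relations $(T_s-v_s)(T_s+v_s^{-1})=0$ for all $s$, and $T_sT_{s'}T_s\cdots=T_{s'}T_sT_{s'}\cdots$ (both sides with $m_{s,s'}$ factors) for all $s\ne s'$ with $m_{s,s'}\ne\infty$. (In particular each $T_s$ is invertible.) Edge contraction: $e=\{s_+,s_-\}\subseteq S$ with $m_{s_+,s_-}=3$; $S/e=(S\setminus\{s_+,s_-\})\sqcup\{s_0\}$; $N=(n_{s,s'})$ with $n_{s,s}=1$, $n_{s,s'}=m_{s,s'}$ for distinct $s,s'\ne s_0$, and for $s\neq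 s_0$: $n_{s,s_0}=n_{s_0,s}=m_{s,s_+}+m_{s,s_-}-2$ if $m_{s,s_+}=2$ or $m_{s,s_-}=2$ (with $\infty+k=\infty$), and $=\infty$ if both are $>2$. The induced weight function is $L_{S/e}(s_0)=L_S(s_+)$ and $L_{S/e}(s)=L_S(s)$ for $s\ne s_0$ (note $s_+,s_-$ are conjugate so $L_S(s_+)=L_S(s_-)$). $H_{S/e}$ is the Hecke algebra of $(S/e,N,L_{S/e})$, with generators denoted $T'_s$, $s\in S/e$. *)

From HB Require Import structures.
From mathcomp Require Import all_boot all_order all_algebra.
Set Implicit Arguments. Unset Strict Implicit. Unset Printing Implicit Defensive.
Import GRing.Theory.
Local Open Scope ring_scope.

(* Coxeter matrix entries: [Some k] = k, [None] = infinity. *)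
Definition cox_entry := option nat.

Record coxeter_matrix (S : eqType) (m : S -> S -> cox_entry) : Prop := {
  cm_sym : forall s s', m s s' = m s' s;
  cm_one : forall s s', m s s' = Some 1%N <-> s = s';
  cm_pos : forall s s', m s s' <> Some 0%N }.

Definition alt (S : Type) (s s' : S) (n : nat) : seq S :=
  mkseq (fun i => if odd i then s' else s) n.

(* The Coxeter group W_{S,M}: words in S modulo the congruence generated by
   s s = 1 and the braid relations (a presentation as a monoid, which is the
   group since generators are involutions). *)
Inductive cox_eq (S : eqType) (m : S -> S -> cox_entry) : seq S -> seq S -> Prop :=
| ce_refl w : cox_eq m w w
| ce_sym w w' : cox_eq m w w' -> cox_eq m w' w
| ce_trans w1 w2 w3 : cox_eq m w1 w2 -> cox_eq m w2 w3 -> cox_eq m w1 w3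
| ce_cat w1 w1' w2 w2' : cox_eq m w1 w1' -> cox_eq m w2 w2' ->
    cox_eq m (w1 ++ w2) (w1' ++ w2')
| ce_sq s : cox_eq m [:: s; s] [::]
| ce_braid s s' n : s != s' -> m s s' = Some n ->
    cox_eq m (alt s s' n) (alt s' s n).

(* s and s' are conjugate in W: s' = w s w^{-1}, with w^{-1} = rev w. *)
Definition cox_conj (S : eqType) (m : S -> S -> cox_entry) (s s' : S) : Prop :=
  exists w : seq S, cox_eq m (w ++ s :: rev w) [:: s'].

Definition weight_function (S : eqType) (m : S -> S -> cox_entry) (L : S -> int) :=
  forall s s', cox_conj m s s' -> L s = L s'.

(* An A = Z[v,v^-1]-algebra is encoded as a ring R with a central unit v
   (with inverse vi): this is exactly a ring morphism Z[v,v^-1] -> Z(R). *)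
Definition is_Aalg (R : pzRingType) (v vi : R) : Prop :=
  [/\ v * vi = 1, vi * v = 1 & forall x, v * x = x * v].

Definition vpow (R : pzRingType) (v vi : R) (k : int) : R :=
  match k with Posz n => v ^+ n | Negz n => vi ^+ n.+1 end.

Definition hecke_rel (S : eqType) (m : S -> S -> cox_entry) (L : S -> int)
  (R : pzRingType) (v vi : R) (T : S -> R) : Prop :=
  (forall s, (T s - vpow v vi (L s)) * (T s + vpow v vi (- L s)) = 0) /\
  (forall s s' n, s != s' -> m s s' = Some n ->
     \prod_(x <- alt s s' n) T x = \prod_(x <- alt s' s n) T x).

(* (H, v, vi, T) is the Hecke algebra H_S of (S, m, L): the A-algebra
   presented by generators T s and the Hecke relations (universal property). *)
Definition is_hecke_algebra (S : eqType) (m : S -> S -> cox_entry) (L : S -> int)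
  (H : pzRingType) (v vi : H) (T : S -> H) : Prop :=
  [/\ is_Aalg v vi, hecke_rel m L v vi T &
   forall (B : pzRingType) (w wi : B) (U : S -> B),
     is_Aalg w wi -> hecke_rel m L w wi U ->
     exists f : {rmorphism H -> B},
       [/\ f v = w, (forall s, f (T s) = U s) &
        forall g : {rmorphism H -> B}, g v = w -> (forall s, g (T s) = U s) ->
          forall x, g x = f x]].

(* Edge contraction. S/e = option {s | s <> s+, s <> s-}, None = s0. *)
Definition contr_set (S : eqType) (sp sm : S) : eqType :=
  option {s : S | (s != sp) && (s != sm)}.

Definition oadd2 (x y : cox_entry) : cox_entry :=
  match x, y with Some a, Some b => Some (a + b - 2)%N | _, _ => None end.

Definition contr_entry (x y : cox_entry) : cox_entry :=
  if (x == Some 2%N) || (y == Some 2%N) then oadd2 x y else None.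

Definition contr_matrix (S : eqType) (m : S -> S -> cox_entry) (sp sm : S)
  (a b : contr_set sp sm) : cox_entry :=
  match a, b with
  | Some a, Some b => m (val a) (val b)
  | None, None => Some 1%N
  | Some a, None => contr_entry (m (val a) sp) (m (val a) sm)
  | None, Some b => contr_entry (m (val b) sp) (m (val b) sm)
  end.

Definition contr_weight (S : eqType) (L : S -> int) (sp sm : S)
  (a : contr_set sp sm) : int :=
  match a with Some a => L (val a) | None => L sp end.

From HB Require Import structures.
From mathcomp Require Import all_boot all_order all_algebra.
Set Implicit Arguments. Unset Strict Implicit. Unset Printing Implicit Defensive.
Import GRing.Theory.
Local Open Scope ring_scope.

(* The image [T_+ T_- T_+^-1] of [T'_s0] is the conjugate of [T_-] by [T_+],
   and by the braid relation [T_+ T_- T_+ = T_- T_+ T_-] it is also the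
   conjugate [T_-^-1 T_+ T_-] of [T_+].  Conjugation by a unit preserves the
   quadratic relation with central coefficients, so the second description
   gives the quadratic relation of weight [L s+].  If [m s s+ = 2], then [T_s]
   commutes with [T_+] and the braid relation of [T_s] with [T_-] (of length
   [n s s0 = m s s-]) transfers to its conjugate; symmetrically if
   [m s s- = 2], using the second description.  The universal property of
   [H_{S/e}] then provides the homomorphism. *)

Definition braid_rel (R : pzRingType) (a b : R) (n : nat) : Prop :=
  \prod_(x <- alt a b n) x = \prod_(x <- alt b a n) x.

Lemma alt_map (A B : Type) (f : A -> B) (s s' : A) (n : nat) :
  map f (alt s s' n) = alt (f s) (f s') n.
Proof. by rewrite /alt /mkseq -map_comp; apply: eq_map => i /=; case: odd. Qed.

Lemma prod_alt (A : Type) (R : pzRingType) (F : A -> R) (s s' : A) (n : nat) :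
  \prod_(x <- alt s s' n) F x = \prod_(x <- alt (F s) (F s') n) x.
Proof. by rewrite -alt_map big_map. Qed.

Lemma braid_rel_sym (R : pzRingType) (a b : R) (n : nat) :
  braid_rel a b n -> braid_rel b a n.
Proof. exact: esym. Qed.

Lemma braid_rel2 (R : pzRingType) (a b : R) : braid_rel a b 2 -> a * b = b * a.
Proof. by rewrite /braid_rel /alt /= !big_cons big_nil !mulr1. Qed.

Lemma braid_rel3 (R : pzRingType) (a b : R) :
  braid_rel a b 3 -> a * b * a = b * a * b.
Proof. by rewrite /braid_rel /alt /= !big_cons big_nil !mulr1 !mulrA. Qed.

Section Conjugation.

Variables (R : pzRingType) (y yi : R).
Hypotheses (yiK : yi * y = 1) (yyi : y * yi = 1).

Lemma conjrM (a b : R) : y * a * yi * (y * b * yi) = y * (a * b) * yi.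
Proof. by rewrite !mulrA -(mulrA _ yi y) yiK mulr1. Qed.

Lemma conjr_comm (t : R) : t * y = y * t -> y * t * yi = t.
Proof. by move=> ty; rewrite -ty -mulrA yyi mulr1. Qed.

Lemma comm_inv (t : R) : t * y = y * t -> t * yi = yi * t.
Proof.
move=> ty; rewrite -[t * yi]mul1r -yiK -mulrA (mulrA y) -ty -mulrA.
by rewrite yyi mulr1.
Qed.

Lemma prod_conjr (s : seq R) :
  \prod_(x <- map (fun x => y * x * yi) s) x = y * (\prod_(x <- s) x) * yi.
Proof.
elim: s => [|x s IH]; first by rewrite !big_nil mulr1.
by rewrite !big_cons IH conjrM.
Qed.

Lemma braid_rel_conjr (t c : R) (n : nat) : t * y = y * t ->
  braid_rel t c n -> braid_rel t (y * c * yi) n.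
Proof.
move=> ty tc; rewrite /braid_rel -(conjr_comm ty) -!(alt_map (fun x => y * x * yi)) !prod_conjr.
by rewrite tc.
Qed.

Lemma conjr_quad (c q q' : R) : q * y = y * q -> q' * y = y * q' ->
  (y * c * yi - q) * (y * c * yi + q') = y * ((c - q) * (c + q')) * yi.
Proof.
move=> qy q'y; rewrite -conjrM; congr (_ * _).
  by rewrite mulrBr mulrBl (conjr_comm qy).
by rewrite mulrDr mulrDl (conjr_comm q'y).
Qed.

End Conjugation.

Lemma braid3_conjr (R : pzRingType) (a ai b bi : R) :
  ai * a = 1 -> a * ai = 1 -> bi * b = 1 ->
  a * b * a = b * a * b -> a * b * ai = bi * a * b.
Proof.
move=> aiK aai biK aba.
transitivity (bi * (b * a * b) * ai); first by rewrite !mulrA biK mul1r.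
by rewrite -aba !mulrA -(mulrA _ a ai) aai mulr1.
Qed.

Section Aalgebra.

Variables (R : pzRingType) (v vi : R).
Hypothesis HA : is_Aalg v vi.

Lemma vpowN_inv (k : int) : vpow v vi k * vpow v vi (- k) = 1.
Proof.
case: HA => vvi viv _.
have expr_inv a b : a * b = 1 -> forall n, a ^+ n * b ^+ n = 1.
  move=> ab; elim=> [|n IH]; first by rewrite !expr0 mulr1.
  by rewrite exprS exprSr mulrA -(mulrA a) IH mulr1.
by case: k => [[|n]|n] /=; [rewrite mulr1 | apply: expr_inv..].
Qed.

Lemma vpow_central (k : int) (x : R) : vpow v vi k * x = x * vpow v vi k.
Proof.
case: HA => vvi viv vC.
have viC : vi * x = x * vi by rewrite (comm_inv viv vvi) ?vC.
by case: k => n /=; apply/esym/commrX; rewrite /GRing.comm ?vC ?viC.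
Qed.

Lemma hecke_gen_unit (S : eqType) (m : S -> S -> cox_entry) (L : S -> int)
    (T : S -> R) (s : S) :
  hecke_rel m L v vi T -> exists ti, ti * T s = 1 /\ T s * ti = 1.
Proof.
move=> [Hq _]; set q := vpow v vi (L s); set q' := vpow v vi (- L s).
have qq' : q * q' = 1 by apply: vpowN_inv.
have qC : q * T s = T s * q by apply: vpow_central.
have q'C : q' * T s = T s * q' by apply: vpow_central.
(* the quadratic relation reads [T s * (T s + q' - q) = 1] *)
have := Hq s; rewrite -/q -/q' mulrBl !mulrDr qq' qC => /subr0_eq E.
exists (T s + q' - q); split.
  by rewrite mulrBl mulrDl qC q'C E [_ + 1]addrC addrK.
by rewrite mulrBr mulrDr E [_ + 1]addrC addrK.
Qed.

End Aalgebra.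

Section ContractedGenerators.

Variables (S : eqType) (m : S -> S -> cox_entry) (L : S -> int) (sp sm : S).
Variables (R : pzRingType) (v vi : R) (T : S -> R) (ai bi : R).
Hypotheses (HA : is_Aalg v vi) (HT : hecke_rel m L v vi T).
Hypotheses (spm : sp != sm) (He : m sp sm = Some 3%N).
Hypotheses (aiK : ai * T sp = 1) (aai : T sp * ai = 1).
Hypotheses (biK : bi * T sm = 1) (bbi : T sm * bi = 1).

Definition contr_gen (x : contr_set sp sm) : R :=
  if x is Some s then T (val s) else T sp * T sm * ai.

Lemma hecke_braid (s s' : S) (n : nat) :
  s != s' -> m s s' = Some n -> braid_rel (T s) (T s') n.
Proof. by move=> ss' hn; rewrite /braid_rel -!prod_alt; apply: HT.2. Qed.

Lemma contr_gen_conjr : T sp * T sm * ai = bi * T sp * T sm.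
Proof. exact/braid3_conjr/braid_rel3/hecke_braid. Qed.

Lemma contr_gen_quad :
  (contr_gen None - vpow v vi (L sp)) * (contr_gen None + vpow v vi (- L sp)) = 0.
Proof.
rewrite /= contr_gen_conjr conjr_quad ?HT.1 ?mulr0 ?mul0r //;
  exact: vpow_central.
Qed.

Lemma braid_contr_gen (t : {s : S | (s != sp) && (s != sm)}) (n : nat) :
  contr_entry (m (val t) sp) (m (val t) sm) = Some n ->
  braid_rel (T (val t)) (contr_gen None) n.
Proof.
have /andP[tsp tsm] := valP t; rewrite /contr_entry /=.
case: eqP => [tp2 | _] /=.
  have tC := braid_rel2 (hecke_braid tsp tp2).
  rewrite tp2; case tsmk: (m (val t) sm) => [k|] //= [<-]; rewrite addKn.
  exact/braid_rel_conjr/hecke_braid.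
case: eqP => // tm2.
have tC := comm_inv biK bbi (braid_rel2 (hecke_braid tsm tm2)).
rewrite tm2 contr_gen_conjr; case tspk: (m (val t) sp) => [k|] //= [<-].
rewrite addnK; exact/braid_rel_conjr/hecke_braid.
Qed.

Lemma contr_hecke_rel :
  hecke_rel (@contr_matrix S m sp sm) (@contr_weight S L sp sm) v vi contr_gen.
Proof.
split; first by case=> [s|] /=; [exact: HT.1 | exact: contr_gen_quad].
move=> [s|] [s'|] n ss' /= hn; rewrite prod_alt [RHS]prod_alt.
- apply: hecke_braid hn; apply: contraNneq ss' => /val_inj->; exact: eqxx.
- exact: braid_contr_gen.
- exact/braid_rel_sym/braid_contr_gen.
- by rewrite eqxx in ss'.
Qed.

End ContractedGenerators.

Theorem mainTheorem5 (S : eqType) (m : S -> S -> cox_entry) (L : S -> int)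
  (sp sm : S)
  (Hm : coxeter_matrix m) (HL : weight_function m L)
  (He : m sp sm = Some 3%N)
  (H : pzRingType) (v vi : H) (T : S -> H)
  (HH : is_hecke_algebra m L v vi T)
  (H' : pzRingType) (v' vi' : H') (T' : contr_set sp sm -> H')
  (HH' : is_hecke_algebra (@contr_matrix S m sp sm) (@contr_weight S L sp sm) v' vi' T') :
  exists phi : {rmorphism H' -> H},
    [/\ phi v' = v,
        (forall s : {s : S | (s != sp) && (s != sm)}, phi (T' (Some s)) = T (val s)) &
        exists Tinv : H, [/\ Tinv * T sp = 1, T sp * Tinv = 1 &
                             phi (T' None) = T sp * T sm * Tinv]].
Proof.
case: HH => HA HT _; case: HH' => _ _ Huniv.
have spm : sp != sm.
  by apply/eqP => spm; move: He; rewrite spm (cm_one Hm sm sm).2.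
have [ai [aiK aai]] := hecke_gen_unit HA sp HT.
have [bi [biK bbi]] := hecke_gen_unit HA sm HT.
have [phi [phiv phiT _]] :=
  Huniv H v vi _ HA (contr_hecke_rel HA HT spm He aiK aai biK bbi).
exists phi; split=> [//| s | ]; first exact: (phiT (Some s)).
by exists ai; split; rewrite ?(phiT None).
Qed.
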